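(* Let $q\in\mathbb{N}$, $p=4q$, and let $S=\{0,1,\ldots,p-1\}$. For $m,n\in S$ define $$g_p(m,n)=\mathbf{d}_{2q}\!\left(0,\ m+n\cdot(-1)^{\mathbf{d}_2(0,\frac{m}{2q})}+q\,\mathbf{d}_2\!\left(0,\tfrac{m}{2q}\right)\mathbf{d}_2\!\left(0,\tfrac{n}{2q}\right)\right)+2q\,\mathbf{d}_2\!\left(0,\ \mathbf{d}_2\!\left(0,\tfrac{m}{2q}\right)+\mathbf{d}_2\!\left(0,\tfrac{n}{2q}\right)\right).$$ Then $S$ under $g_p$ is a group isomorphic to the dicyclic group $Q_{4q}=\langle a,x\mid a^{2q}=1,\ x^2=a^q,\ xax^{-1}=a^{-1}\rangle$ of order $4q$ (nonabelian for $q\ge 2$).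
   Context: For an integer $p\ge 2$, an integer $k\ge 0$ and a real number $x$ (possibly negative), the digit function is $\mathbf{d}_p(k,x)=\lfloor x/p^k\rfloor-p\lfloor x/p^{k+1}\rfloor$. In particular $\mathbf{d}_{r}(0,y)$ for an integer $y$ is the residue of $y$ modulo $r$ in $\{0,\ldots,r-1\}$. *)

From mathcomp Require Import all_boot all_order all_algebra all_fingroup.
Set Implicit Arguments. Unset Strict Implicit. Unset Printing Implicit Defensive.
Import Order.TTheory GRing.Theory Num.Theory.
Local Open Scope ring_scope.

(* digit function d_p(k,x) = floor(x/p^k) - p*floor(x/p^(k+1)); all arguments
   occurring in the statement are rational, so x ranges over rat. *)
Definition digit (p k : nat) (x : rat) : int :=
  Num.floor (x / (p ^ k)%:R) - (p%:Z) * Num.floor (x / (p ^ k.+1)%:R).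

Definition inS (q : nat) (m : int) : Prop := 0 <= m < (4 * q)%:Z.

Definition gp (q : nat) (m n : int) : int :=
  let dm := digit 2 0 (m%:~R / (2 * q)%:R) in
  let dn := digit 2 0 (n%:~R / (2 * q)%:R) in
  digit (2 * q) 0 (m%:~R + n%:~R * (-1) ^ dm + (q%:R) * dm%:~R * dn%:~R)
  + (2 * q)%:Z * digit 2 0 ((dm + dn)%:~R).

(* Write m in S as m = r + 2q b with 0 <= r < 2q and b in {0,1}.  Since
   b = d_2(0, m/2q), the formula for g_p is the multiplication of the dicyclic
   group in the normal form a^r x^b:
     (r1, b1) (r2, b2) = (r1 + (-1)^b1 r2 + q b1 b2 mod 2q, b1 + b2 mod 2).
   So for any a, x satisfying the defining relations, m |-> a^r x^b is a
   homomorphism out of (S, g_p).  For the regular representation of Q_{4q} on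
   Z_{2q} x {0,1} this map is injective, since the image of (0,0) recovers
   (r, b); hence (S, g_p) is a group isomorphic to the permutation group
   generated by a and x, and the same maps into any other group generated by
   elements satisfying the relations give the universal property of the
   presentation. *)

From mathcomp Require Import all_boot all_order all_algebra all_fingroup.
From mathcomp Require Import zify ring.
Import Order.TTheory GRing.Theory Num.Theory.
Set Implicit Arguments. Unset Strict Implicit. Unset Printing Implicit Defensive.
Local Open Scope ring_scope.

Lemma modz_bounds (z : int) (p : nat) : (0 < p)%N ->
  0 <= (z %% p)%Z < p.
Proof.
move=> p_gt0; rewrite modz_ge0 ?ltz_pmod ?ltz_nat //.
by rewrite eqz_nat -lt0n.
Qed.

Lemma floor_divz (z : int) (p : nat) : (0 < p)%N ->
  Num.floor (z%:~R / p%:R : rat) = (z %/ p)%Z.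
Proof.
move=> p_gt0; apply: floor_def.
rewrite ler_pdivlMr ?ltr_pdivrMr ?ltr0n // -[p%:R]/((p%:Z)%:~R : rat).
rewrite -!intrM ler_int ltr_int.
have := modz_bounds z p_gt0; rewrite {2 3}(divz_eq z p); lia.
Qed.

Lemma digit_int (p : nat) (z : int) : (0 < p)%N -> digit p 0 z%:~R = (z %% p)%Z.
Proof.
by move=> p_gt0; rewrite /digit expn0 expn1 divr1 intrKfloor floor_divz // /modz mulrC.
Qed.

Definition mkS (q : nat) (r : int) (b : bool) : int := r + (2 * q * b)%N.

Lemma mkS_false (q : nat) (r : int) : mkS q r false = r.
Proof. by rewrite /mkS muln0 addr0. Qed.

Lemma mkS0_true (q : nat) : mkS q 0 true = (2 * q)%N.
Proof. by rewrite /mkS muln1 add0r. Qed.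

Variant inS_spec (q : nat) : int -> Prop :=
  InS (r : int) (b : bool) of 0 <= r < (2 * q)%N : inS_spec q (mkS q r b).

Lemma inSP (q : nat) (m : int) : inS q m -> inS_spec q m.
Proof.
case/andP=> m_ge0 m_lt; case: (ltP m (2 * q)%N) => m_lt2.
  by rewrite -(mkS_false q m); constructor; apply/andP.
have -> : m = mkS q (m - (2 * q)%N%:Z) true by rewrite /mkS muln1 subrK.
by constructor; apply/andP; split; lia.
Qed.

Section Elements.
Variables (q : nat).
Hypothesis q_gt0 : (0 < q)%N.

Lemma inS0 : inS q 0.
Proof. by rewrite /inS; lia. Qed.

Lemma inS1 : inS q 1.
Proof. by rewrite /inS; lia. Qed.

Lemma inS2q : inS q (2 * q)%N.
Proof. by rewrite /inS; lia. Qed.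

End Elements.

Section Coordinates.
Variables (q : nat) (r : int) (b : bool).
Hypothesis r_bounds : 0 <= r < (2 * q)%N.

Lemma mkS_inS : inS q (mkS q r b).
Proof. by move: r_bounds; rewrite /inS /mkS; case: b; lia. Qed.

Lemma mkS_divz : (mkS q r b %/ (2 * q)%N)%Z = b.
Proof.
have q_gt0 : (0 < q)%N by move: r_bounds; lia.
rewrite /mkS addrC mulnC PoszM divzMDl ?eqz_nat ?muln_eq0 -?lt0n ?q_gt0 //.
by rewrite divz_small ?addr0 //; move: r_bounds; rewrite /absz; lia.
Qed.

Lemma digit_mkS : digit 2 0 ((mkS q r b)%:~R / (2 * q)%N%:R) = b.
Proof.
have q_gt0 : (0 < q)%N by move: r_bounds; lia.
rewrite /digit expn0 expn1 divr1 -mulrA -invfM -natrM !floor_divz ?muln_gt0 ?q_gt0 //.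
rewrite mkS_divz (@divz_small _ (2 * q * 2)%N) ?mulr0 ?subr0 //.
by move: mkS_inS; rewrite /inS /absz; lia.
Qed.

End Coordinates.

Lemma gp_mkS (q : nat) (r1 r2 : int) (b1 b2 : bool) :
  0 <= r1 < (2 * q)%N -> 0 <= r2 < (2 * q)%N ->
  gp q (mkS q r1 b1) (mkS q r2 b2) =
  mkS q (((if b1 then r1 - r2 else r1 + r2) + (q * (b1 && b2))%N) %% (2 * q)%N)%Z
      (b1 (+) b2).
Proof.
move=> r1_bounds r2_bounds; have q_gt0 : (0 < q)%N by move: r1_bounds; lia.
rewrite /gp (digit_mkS b1 r1_bounds) (digit_mkS b2 r2_bounds).
have shift (k x y : int) : x = y + k * (2 * q)%N -> (x = y %[mod (2 * q)%N])%Z.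
  by move->; rewrite [y + _]addrC modzMDl.
have -> : (q%:R : rat) = (q%:Z)%:~R by [].
case: b1; case: b2; rewrite /= ?expr0z ?expr1z ?mulrN1 ?mulr1 -?intrN -?intrM -?intrD.
all: rewrite !digit_int ?muln_gt0 ?q_gt0 // /mkS /=.
all: congr (_ + _); first [lia | apply: (shift 0); lia | apply: (shift 1); lia].
Qed.

Lemma gp_inS (q : nat) (m n : int) : inS q m -> inS q n -> inS q (gp q m n).
Proof.
case/inSP=> r1 b1 r1_bounds; case/inSP=> r2 b2 r2_bounds.
have q_gt0 : (0 < q)%N by move: r1_bounds; lia.
by rewrite gp_mkS //; apply: mkS_inS; rewrite modz_bounds ?muln_gt0 ?q_gt0.
Qed.

Lemma gp_noncomm (q : nat) : (2 <= q)%N -> gp q 1 (2 * q)%N != gp q (2 * q)%N 1.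
Proof.
move=> q_ge2; have r0 : 0 <= (0 : int) < (2 * q)%N by lia.
have r1 : 0 <= (1 : int) < (2 * q)%N by lia.
have -> : (1 : int) = mkS q 1 false by rewrite mkS_false.
rewrite -mkS0_true !gp_mkS //= !muln0 !addr0 sub0r modz_small //.
rewrite -(modzDl (-1)) modz_small /mkS; lia.
Qed.

Section ExpgModz.
Variables (gT : finGroupType) (d : nat) (a : gT).
Hypotheses (d_gt0 : (0 < d)%N) (a_order : (a ^+ d = 1)%g).

Definition expgz (z : int) : gT := (a ^+ `|(z %% d)%Z|%N)%g.

Lemma eq_expgz (y z : int) : (y = z %[mod d])%Z -> expgz y = expgz z.
Proof. by rewrite /expgz => ->. Qed.

Lemma expgz_nat (k : nat) : expgz k = (a ^+ k)%g.
Proof. by rewrite /expgz modz_nat absz_nat expg_mod. Qed.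

Lemma expgzD (y z : int) : expgz (y + z) = (expgz y * expgz z)%g.
Proof.
have [y_ge0 _] := andP (modz_bounds y d_gt0).
have [z_ge0 _] := andP (modz_bounds z d_gt0).
rewrite -(eq_expgz (modzDm y z d)) -[(y %% d)%Z]gez0_abs // -[(z %% d)%Z]gez0_abs //.
by rewrite -PoszD !expgz_nat expgD.
Qed.

Lemma expgzN (z : int) : expgz (- z) = (expgz z)^-1%g.
Proof.
by apply/eqP; rewrite eq_mulgV1 invgK -expgzD addNr (expgz_nat 0) expg0.
Qed.

Lemma conj_expgz (x : gT) (z : int) :
  (x * a * x^-1 = a^-1)%g -> (x * expgz z = expgz (- z) * x)%g.
Proof.
move=> x_conj; have a_conj : (a ^ x^-1 = a^-1)%g by rewrite conjgE invgK mulgA.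
by rewrite expgzN /expgz -expgVn -a_conj -conjXg conjgE invgK mulgA mulgKV.
Qed.
End ExpgModz.

Section DicyclicMap.
Variables (gT : finGroupType) (q : nat) (a x : gT).

Definition dicyc_map (m : int) : gT :=
  (expgz (2 * q) a m * x ^+ ((m %/ (2 * q)%N)%Z == 1%R))%g.

Lemma dicyc_map_mem (m : int) : dicyc_map m \in (<[a]> <*> <[x]>)%g.
Proof.
have a_mem : a \in (<[a]> <*> <[x]>)%g by rewrite mem_gen // inE cycle_id.
have x_mem : x \in (<[a]> <*> <[x]>)%g by rewrite mem_gen // inE cycle_id orbT.
by rewrite groupM ?groupX.
Qed.

Lemma dicyc_map_mkS (r : int) (b : bool) : 0 <= r < (2 * q)%N ->
  dicyc_map (mkS q r b) = (expgz (2 * q) a r * x ^+ b)%g.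
Proof.
move=> r_bounds; rewrite /dicyc_map mkS_divz //; congr (_ * _)%g.
  by apply: eq_expgz; rewrite /mkS addrC mulnC PoszM modzMDl.
by case: b.
Qed.

Hypotheses (q_gt0 : (0 < q)%N) (a_order : (a ^+ (2 * q) = 1)%g).
Hypotheses (x_sqr : (x ^+ 2 = a ^+ q)%g) (x_conj : (x * a * x^-1 = a^-1)%g).

Lemma dicyc_map0 : dicyc_map 0 = 1%g.
Proof.
have r0 : 0 <= (0 : int) < (2 * q)%N by rewrite lexx ltz_nat muln_gt0.
by rewrite -(mkS_false q 0) dicyc_map_mkS // (expgz_nat a_order 0) mulg1.
Qed.

Lemma dicyc_map1 : dicyc_map 1 = a.
Proof.
have r1 : 0 <= (1 : int) < (2 * q)%N by move: q_gt0; lia.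
by rewrite -(mkS_false q 1) dicyc_map_mkS // (expgz_nat a_order 1) mulg1.
Qed.

Lemma dicyc_map_2q : dicyc_map (2 * q)%N = x.
Proof.
have r0 : 0 <= (0 : int) < (2 * q)%N by rewrite lexx ltz_nat muln_gt0.
by rewrite -mkS0_true dicyc_map_mkS // (expgz_nat a_order 0) mul1g.
Qed.

Lemma dicyc_mapM (m n : int) : inS q m -> inS q n ->
  dicyc_map (gp q m n) = (dicyc_map m * dicyc_map n)%g.
Proof.
have Q_gt0 : (0 < 2 * q)%N by rewrite muln_gt0.
case/inSP=> r1 b1 r1_bounds; case/inSP=> r2 b2 r2_bounds.
rewrite gp_mkS // !dicyc_map_mkS ?modz_bounds // (eq_expgz _ (modz_mod _ _)).
rewrite expgzD // expgz_nat //.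
have xx : (x * x = a ^+ q)%g by rewrite -x_sqr expgS expg1.
case: b1; case: b2; rewrite /= ?muln0 ?muln1 ?expg0 ?expg1 ?mulg1.
- by rewrite mulgA -(mulgA _ x) conj_expgz // mulgA -expgzD // -mulgA xx.
- by rewrite -mulgA conj_expgz // mulgA -expgzD.
- by rewrite mulgA expgzD.
- by rewrite expgzD.
Qed.
End DicyclicMap.

Section PermutationModel.
Variable q : nat.
Hypothesis q_gt0 : (0 < q)%N.
Let S0 : inS q 0 := inS0 q_gt0.
Let S1 : inS q 1 := inS1 q_gt0.
Let S2q : inS q (2 * q)%N := inS2q q_gt0.

Local Notation point := ('Z_(2 * q) * bool)%type.

(* The point (i, b) stands for a^i x^b; rot and flip are right multiplication
   by a and x, so this is the regular representation of Q_{4q}. *)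
Definition rot (p : point) : point := (if p.2 then p.1 - 1 else p.1 + 1, p.2).
Definition flip (p : point) : point := if p.2 then (p.1 + q%:R, false) else (p.1, true).

Definition unrot (p : point) : point := (if p.2 then p.1 + 1 else p.1 - 1, p.2).
Definition unflip (p : point) : point := if p.2 then (p.1, false) else (p.1 - q%:R, true).

Lemma rotK : cancel rot unrot.
Proof. by case=> i []; rewrite /unrot /rot /= ?subrK ?addrK. Qed.

Lemma flipK : cancel flip unflip.
Proof. by case=> i []; rewrite /unflip /flip /= ?addrK. Qed.

Definition rot_perm : {perm point} := perm (can_inj rotK).
Definition flip_perm : {perm point} := perm (can_inj flipK).

Lemma twoq_gt1 : (1 < 2 * q)%N.
Proof. by move: q_gt0; lia. Qed.

Lemma rot_perm_exp (k : nat) (p : point) :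
  (rot_perm ^+ k)%g p = (if p.2 then p.1 - k%:R else p.1 + k%:R, p.2).
Proof.
rewrite permX; case: p => i b; elim: k => [|k IHk] /=.
  by case: b; rewrite ?subr0 ?addr0.
rewrite IHk permE /rot /= mulrSr; case: b {IHk}; congr (_, _); ring.
Qed.

Lemma rot_perm_order : (rot_perm ^+ (2 * q) = 1)%g.
Proof.
apply/permP=> -[i b]; rewrite rot_perm_exp perm1 pchar_Zp ?twoq_gt1 //.
by rewrite subr0 addr0; case: b.
Qed.

Lemma flip_perm_sqr : (flip_perm ^+ 2 = rot_perm ^+ q)%g.
Proof.
apply/permP=> -[i [|]]; rewrite rot_perm_exp expgS expg1 permM !permE /flip //=.
have qq : (q%:R + q%:R : 'Z_(2 * q)) = 0.
  by rewrite -natrD addnn -mul2n pchar_Zp ?twoq_gt1.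
by congr (_, _); rewrite -[RHS]addr0 -qq; ring.
Qed.

Lemma flip_perm_conj : (flip_perm * rot_perm * flip_perm^-1 = rot_perm^-1)%g.
Proof.
have rfr : (rot_perm * flip_perm * rot_perm = flip_perm)%g.
  by apply/permP=> -[i [|]]; rewrite !permM !permE /rot /flip /=; congr (_, _); ring.
by apply: (mulgI rot_perm); rewrite mulgV !mulgA rfr mulgV.
Qed.

Local Notation rep := (dicyc_map q rot_perm flip_perm).

Lemma repM (m n : int) : inS q m -> inS q n -> rep (gp q m n) = (rep m * rep n)%g.
Proof.
by apply: (dicyc_mapM q_gt0);
  [exact: rot_perm_order | exact: flip_perm_sqr | exact: flip_perm_conj].
Qed.

Lemma rep0 : rep 0 = 1%g.
Proof. by apply: dicyc_map0 => //; exact: rot_perm_order. Qed.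

Lemma rep1 : rep 1 = rot_perm.
Proof. by apply: dicyc_map1 => //; exact: rot_perm_order. Qed.

Lemma rep2q : rep (2 * q)%N = flip_perm.
Proof. by apply: dicyc_map_2q => //; exact: rot_perm_order. Qed.

Definition coordS (g : {perm point}) : int :=
  mkS q (nat_of_ord (g (0, false)).1) (g (0, false)).2.

Lemma Zp2q_lt (i : 'Z_(2 * q)) : (i < 2 * q)%N.
Proof. by case: i => i /=; rewrite Zp_cast // twoq_gt1. Qed.

Lemma coordS_inS (g : {perm point}) : inS q (coordS g).
Proof. by apply: mkS_inS; rewrite ltz_nat Zp2q_lt. Qed.

Lemma rep_origin (r : int) (b : bool) : 0 <= r < (2 * q)%N ->
  rep (mkS q r b) (0, false) = (`|r|%:R, b).
Proof.
move=> r_bounds; rewrite dicyc_map_mkS // permM /expgz modz_small //.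
rewrite rot_perm_exp /= add0r.
by case: b; rewrite ?expg0 ?perm1 ?expg1 ?permE.
Qed.

Lemma repK (m : int) : inS q m -> coordS (rep m) = m.
Proof.
case/inSP=> r b r_bounds; rewrite /coordS rep_origin //= val_Zp_nat ?twoq_gt1 //.
by rewrite modn_small ?gez0_abs //; move: r_bounds; lia.
Qed.

Lemma rep_inj (m n : int) : inS q m -> inS q n -> rep m = rep n -> m = n.
Proof. by move=> Sm Sn eq_mn; rewrite -(repK Sm) -(repK Sn) eq_mn. Qed.

Definition dicG := (<[rot_perm]> <*> <[flip_perm]>)%G.

Lemma coordSK (g : {perm point}) : g \in dicG -> rep (coordS g) = g.
Proof.
pose fixed := [set g | rep (coordS g) == g].
have fixedP h : reflect (rep (coordS h) = h) (h \in fixed) by rewrite inE; exact: eqP.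
have fixed_rep m : inS q m -> rep m \in fixed by move=> Sm; apply/fixedP; rewrite repK.
have fixed_group : group_set fixed.
  apply/group_setP; split.
    by rewrite -rep0; exact: fixed_rep S0.
  move=> g1 g2 /fixedP <- /fixedP <-.
  have [Sg1 Sg2] := (coordS_inS g1, coordS_inS g2).
  by rewrite -repM //; apply: fixed_rep; apply: gp_inS.
suff /subsetP /(_ g) : dicG \subset Group fixed_group by move=> /[apply] /fixedP.
rewrite join_subG !cycle_subG; apply/andP; split.
  by rewrite -rep1; exact: fixed_rep S1.
by rewrite -rep2q; exact: fixed_rep S2q.
Qed.

Lemma coordSM (g h : {perm point}) : g \in dicG -> h \in dicG ->
  coordS (g * h) = gp q (coordS g) (coordS h).
Proof.
move=> Gg Gh; have [Sg Sh] := (coordS_inS g, coordS_inS h).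
by rewrite -{1}(coordSK Gg) -{1}(coordSK Gh) -repM // repK //; apply: gp_inS.
Qed.

Lemma gpA (m n k : int) : inS q m -> inS q n -> inS q k ->
  gp q (gp q m n) k = gp q m (gp q n k).
Proof.
move=> Sm Sn Sk; have [Smn Snk] := (gp_inS Sm Sn, gp_inS Sn Sk).
apply: rep_inj; try exact: gp_inS.
by rewrite (repM Smn Sk) (repM Sm Snk) (repM Sm Sn) (repM Sn Sk) [RHS]mulgA.
Qed.

Lemma gp0m (m : int) : inS q m -> gp q 0 m = m.
Proof.
move=> Sm; apply: rep_inj => //; first exact: gp_inS S0 Sm.
by rewrite (repM S0 Sm) rep0 mul1g.
Qed.

Lemma gpm0 (m : int) : inS q m -> gp q m 0 = m.
Proof.
move=> Sm; apply: rep_inj => //; first exact: gp_inS Sm S0.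
by rewrite (repM Sm S0) rep0 mulg1.
Qed.

Lemma gp_inverse (m : int) : inS q m ->
  exists m', inS q m' /\ gp q m m' = 0 /\ gp q m' m = 0.
Proof.
move=> Sm; have Gm : (rep m)^-1%g \in dicG by rewrite groupV dicyc_map_mem.
exists (coordS (rep m)^-1); have Sm' := coordS_inS (rep m)^-1.
split=> //; split; apply: rep_inj; try exact: gp_inS; try exact: S0.
  by rewrite (repM Sm Sm') coordSK // mulgV rep0.
by rewrite (repM Sm' Sm) coordSK // mulVg rep0.
Qed.

Lemma dicG_isog :
  (dicG \isog Grp (a : x : (a ^+ (2 * q) = 1, x ^+ 2 = a ^+ q, x * a * x^-1 = a^-1)))%g.
Proof.
apply: intro_isoGrp.
  apply/existsP; exists (rot_perm, flip_perm).
  by rewrite /= !xpair_eqE eqxx rot_perm_order flip_perm_sqr flip_perm_conj !eqxx.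
move=> rT H /existsP[[a x]] /= /eqP[defH a_order x_sqr x_conj].
pose f g := dicyc_map q a x (coordS g).
have f_morphic : morphic dicG f.
  apply/morphicP=> g h Gg Gh; rewrite /f coordSM //.
  exact: (dicyc_mapM q_gt0 a_order x_sqr x_conj (coordS_inS g) (coordS_inS h)).
have f_rot : f rot_perm = a.
  by rewrite /f -rep1 (repK S1) (dicyc_map1 x q_gt0 a_order).
have f_flip : f flip_perm = x.
  by rewrite /f -rep2q (repK S2q) (dicyc_map_2q x q_gt0 a_order).
apply/homgP; exists (morphm_morphism f_morphic).
apply/eqP; rewrite eqEsubset -defH join_subG !cycle_subG; apply/and3P; split.
- by rewrite morphimEdom; apply/subsetP=> _ /imsetP[g _ ->]; exact: dicyc_map_mem.
- have G_rot : rot_perm \in dicG by rewrite -rep1 dicyc_map_mem.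
  by rewrite -f_rot (@mem_morphim _ _ _ (morphm_morphism f_morphic)).
have G_flip : flip_perm \in dicG by rewrite -rep2q dicyc_map_mem.
by rewrite -f_flip (@mem_morphim _ _ _ (morphm_morphism f_morphic)).
Qed.
End PermutationModel.

Theorem mainTheorem6 (q : nat) (hq : (0 < q)%N) :
  (* group axioms for (S, g_p) *)
  (forall m n, inS q m -> inS q n -> inS q (gp q m n)) /\
  (forall m n k, inS q m -> inS q n -> inS q k ->
     gp q (gp q m n) k = gp q m (gp q n k)) /\
  (exists e, inS q e /\
     (forall m, inS q m -> gp q e m = m /\ gp q m e = m) /\
     (forall m, inS q m -> exists m', inS q m' /\ gp q m m' = e /\ gp q m' m = e)) /\
  (* isomorphism with the dicyclic group Q_{4q} = <a, x | a^{2q}=1, x^2=a^q, x a x^-1 = a^-1> *)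
  (exists (gT : finGroupType) (G : {group gT}) (phi : int -> gT),
     (G \isog Grp (a : x : (a ^+ (2 * q) = 1, x ^+ 2 = a ^+ q, x * a * x^-1 = a^-1)))%g /\
     (forall m, inS q m -> phi m \in G) /\
     (forall y, y \in G -> exists2 m, inS q m & phi m = y) /\
     (forall m n, inS q m -> inS q n -> phi m = phi n -> m = n) /\
     (forall m n, inS q m -> inS q n -> phi (gp q m n) = (phi m * phi n)%g)) /\
  (* nonabelian for q >= 2 *)
  ((2 <= q)%N -> exists m n, inS q m /\ inS q n /\ gp q m n <> gp q n m).
Proof.
split; first exact: gp_inS.
split; first exact: gpA.
split.
  exists 0; split; first exact: (inS0 hq).
  split=> m Sm; last exact: gp_inverse.
  by split; [exact: gp0m | exact: gpm0].
split.
  exists _, (dicG q), (dicyc_map q (rot_perm q) (flip_perm q)); split; first exact: dicG_isog.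
  split=> [m _|]; first exact: dicyc_map_mem.
  split=> [g Gg|]; first by exists (coordS g); [exact: coordS_inS | exact: coordSK].
  by split; [exact: rep_inj | exact: repM].
move=> q_ge2; exists 1, (2 * q)%N; split; first exact: (inS1 hq).
by split; [exact: (inS2q hq) | exact/eqP/gp_noncomm].
Qed.
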